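(* Let $S_N$ be the star graph on $N$ vertices. Then its PIR capacity satisfies $\mathscr{C}(S_N)\le O(N^{-1/2})$ as $N\to\infty$.
   Context: The star graph $S_N$ has $N$ vertices (servers), one of which has degree $N-1$ and the others degree $1$; so there are $K=N-1$ files, file $W_i$ being stored on leaf server $S_i$ and the center server $S_N$. Graph-based PIR model: files are independent, each uniform on $\mathbb{F}_2^L$; a user wants $W_\theta$, $\theta$ uniform on $[K]$ and independent of the files; it sends queries $Q_1,\dots,Q_N$ (independent of the files) to the servers; server $i$ answers $A_i$, a deterministic function of $Q_i$ and the files stored on it. Reliability: $W_\theta$ is determined by all answers and queries. Privacy: $H(\theta\mid Q_i,W_{S_i})=\log K$ for every server $i$, where $W_{S_i}$ is the set of files on server $i$. The rate is $L/\sum_i H(A_i)$; the PIR capacity is the supremum of rates over all schemes and all file lengths $L$. *)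

From HB Require Import structures.
From mathcomp Require Import all_boot all_order all_algebra.
From mathcomp Require Import reals exp.
Unset Printing Implicit Defensive.
Import Order.TTheory GRing.Theory Num.Theory.
Local Open Scope ring_scope.

Section PIR.
Variable R : realType.

Definition log2 (x : R) : R := ln x / ln 2.

Definition entropy {Omega T : finType} (P : Omega -> R) (X : Omega -> T) : R :=
  - \sum_(t : T) (let pt := \sum_(o | X o == t) P o in pt * log2 pt).

Definition cond_entropy {Omega T U : finType} (P : Omega -> R)
  (X : Omega -> T) (Y : Omega -> U) : R :=
  entropy P (fun o => (X o, Y o)) - entropy P Y.

Definition file (L : nat) := 'rV['F_2]_L.

(** A PIR scheme for K files of length L on a set of servers [srv].
    [rnd] is the user's private randomness with distribution [rnd_p];
    query to server s, when the desired index is theta and the randomness is r,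
    is [query s theta r] (queries are thus independent of the files);
    the answer of server s is [answer s q w] where w is the tuple of all files
    (locality to the stored files is required in [valid_pir]).
    A single query alphabet and a single answer alphabet are used for all
    servers (w.l.o.g.: alphabets can be embedded into a common finite type). *)
Record pir_scheme (srv : finType) (K L : nat) := PirScheme {
  rnd : finType;
  rnd_p : rnd -> R;
  qry : finType;
  ans : finType;
  query : srv -> 'I_K -> rnd -> qry;
  answer : srv -> qry -> {ffun 'I_K -> file L} -> ans
}.
Arguments rnd {srv K L} p.
Arguments rnd_p {srv K L} p _.
Arguments qry {srv K L} p.
Arguments ans {srv K L} p.
Arguments query {srv K L} p _ _ _.
Arguments answer {srv K L} p _ _ _.


Definition omega {srv : finType} {K L : nat} (S : pir_scheme srv K L) :=
  ('I_K * rnd S * {ffun 'I_K -> file L})%type.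

(** joint law: theta uniform on [K], independent of the randomness (law rnd_p),
    files independent and uniform on F_2^L, independent of (theta, randomness) *)
Definition prob {srv : finType} {K L : nat} (S : pir_scheme srv K L)
  (o : omega S) : R :=
  K%:R^-1 * rnd_p S o.1.2 * (#|{ffun 'I_K -> file L}|%:R)^-1.

Definition Theta {srv : finType} {K L : nat} (S : pir_scheme srv K L) (o : omega S) : 'I_K := o.1.1.
Definition Wdes {srv : finType} {K L : nat} (S : pir_scheme srv K L) (o : omega S) : file L :=
  o.2 o.1.1.
Definition Qry {srv : finType} {K L : nat} (S : pir_scheme srv K L) (s : srv) (o : omega S) : qry S :=
  query S s o.1.1 o.1.2.
Definition Ans {srv : finType} {K L : nat} (S : pir_scheme srv K L) (s : srv) (o : omega S) : ans S :=
  answer S s (Qry S s o) o.2.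
Definition Wstored {srv : finType} {K L : nat} (store : srv -> {set 'I_K}) (S : pir_scheme srv K L)
  (s : srv) (o : omega S) : {ffun 'I_K -> option (file L)} :=
  [ffun j => if j \in store s then Some (o.2 j) else None].
Definition AllAQ {srv : finType} {K L : nat} (S : pir_scheme srv K L) (o : omega S) :=
  ([ffun s => Ans S s o], [ffun s => Qry S s o]).

Definition valid_pir {srv : finType} {K L : nat} (store : srv -> {set 'I_K})
  (S : pir_scheme srv K L) : Prop :=
  [/\ (0 < K)%N,
      (forall r, 0 <= rnd_p S r) /\ \sum_r rnd_p S r = 1,
      (forall s q (w w' : {ffun 'I_K -> file L}), (forall j, j \in store s -> w j = w' j) ->
          answer S s q w = answer S s q w'),
      (* reliability: H(W_theta | A_[N], Q_[N]) = 0 *)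
      cond_entropy (prob S) (Wdes S) (AllAQ S) = 0 &
      (* privacy: H(theta | Q_s, W_{S_s}) = log K for every server s *)
      (forall s, cond_entropy (prob S) (Theta S)
                   (fun o => (Qry S s o, Wstored store S s o)) = log2 K%:R)].

Definition pir_rate {srv : finType} {K L : nat} (S : pir_scheme srv K L) : R :=
  L%:R / \sum_(s : srv) entropy (prob S) (Ans S s).

(** the star graph S_N with N = K+1 vertices: servers are [option 'I_K],
    leaf [Some i] stores file W_i, the center [None] stores all files *)
Definition star_store (K : nat) (s : option 'I_K) : {set 'I_K} :=
  if s is Some i then [set i] else [set: 'I_K].

End PIR.

Arguments valid_pir {R srv K L} store S.
Arguments pir_rate {R srv K L} S.

(** Conditioning decreases entropy, so [H(A_s) >= H(A_s | Q_s)], and privacy makes the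
    law of the query [Q_s] the same whatever the desired index; hence [H(A_s | Q_s)] is
    the average answer entropy under the query distribution of any fixed index.

    Fix a set [I] of [t] indices and a query [q] to the centre, and for every [k] in [I]
    pick user randomness under which the centre receives [q] when the user wants [W_k].
    By reliability, the centre's answer to [q], the files outside [I] and the [t^2]
    answers of the leaves of [I] to these [t] queries determine all files, whence
    [K L <= H(A_centre | q) + (K - t) L + sum_(k, j in I) H(A_j | query)].  Choosing each
    randomness below its conditional average and averaging over [q] gives
    [t L <= H(A_centre | Q) + t sum_(j in I) H(A_j | Q_j)].  Summing over [t] disjoint
    blocks [I], which exist when [t^2 <= K], yields [t L <= sum_s H(A_s)]: the rate is at
    most [1 / t <= 2 / sqrt N] for [t = floor (sqrt K)]. *)

From HB Require Import structures.
From mathcomp Require Import all_boot all_order all_algebra.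
From mathcomp Require Import reals exp.
From mathcomp Require Import ring lra zify.
Import Order.TTheory GRing.Theory Num.Theory.
Set Implicit Arguments.
Unset Strict Implicit.
Local Open Scope ring_scope.

Arguments log2 {R} x.
Arguments entropy {R Omega T} P X.
Arguments rnd {R srv K L} p.
Arguments rnd_p {R srv K L} p _.
Arguments qry {R srv K L} p.
Arguments query {R srv K L} p _ _ _.
Arguments answer {R srv K L} p _ _ _.
Arguments omega {R srv K L} S.
Arguments prob {R srv K L} S o.
Arguments Theta {R srv K L} S o.
Arguments Qry {R srv K L} S s o.
Arguments Ans {R srv K L} S s o.
Arguments Wstored {R srv K L} store S s o.

Section Gibbs.
Variable R : realType.

Lemma ln2_gt0 : 0 < ln (2 : R).
Proof. by rewrite ln_gt0 // ltr1n. Qed.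

Lemma ler_log2 : {in Num.pos &, {mono @log2 R : x y / x <= y}}.
Proof. by move=> x y x0 y0; rewrite /log2 ler_pM2r ?invr_gt0 ?ln2_gt0 // ler_ln. Qed.

Lemma log2_inj : {in Num.pos &, injective (@log2 R)}.
Proof. by move=> x y x0 y0 /(mulIf (invr_neq0 (lt0r_neq0 ln2_gt0))); exact: ln_inj. Qed.

Lemma log2_le0 (x : R) : x <= 1 -> log2 x <= 0.
Proof. by move=> x1; rewrite mulr_le0_ge0 ?ln_le0 // invr_ge0 ltW ?ln2_gt0. Qed.

Lemma log2V (x : R) : 0 < x -> log2 x^-1 = - log2 x.
Proof. by move=> x0; rewrite /log2 lnV ?posrE // mulNr. Qed.

Lemma log2_exp2 (n : nat) : log2 (2 ^ n)%:R = n%:R :> R.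
Proof. by rewrite /log2 natrX lnXn // mulrnAl divff ?lt0r_neq0 ?ln2_gt0. Qed.

Lemma ln_leif_subr1 (x : R) : 0 < x -> ln x <= x - 1 ?= iff (x == 1).
Proof.
move=> x0; have [->|x1] := eqVneq x 1; first by rewrite ln1 subrr; apply/leif_refl.
have /expR_gt1Dx : ln x != 0 by rewrite ln_eq0.
rewrite lnK ?posrE // => lt_x; split; first lra.
by apply/negbTE; rewrite lt_eqF //; lra.
Qed.

(* For [p > 0] this is [ln x <= x - 1] at [x = q / p], scaled by [p / ln 2]. *)
Lemma gibbs_term (p q : R) : 0 <= p -> 0 <= q -> (0 < p -> 0 < q) ->
  p * log2 q <= p * log2 p + (q - p) / ln 2 ?= iff (p == q).
Proof.
move=> p_ge0 q_ge0 pq; have l2 := ln2_gt0.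
have [->|p_neq0] := eqVneq p 0.
  rewrite !mul0r add0r subr0; split; first by rewrite divr_ge0 // ltW.
  by rewrite eq_sym mulf_eq0 invr_eq0 (gt_eqF l2) orbF eq_sym.
have p_gt0 : 0 < p by rewrite lt_def p_neq0 p_ge0.
have q_gt0 := pq p_gt0.
have -> : p * log2 q = p * log2 p + p / ln 2 * ln (q / p).
  by rewrite ln_div ?posrE // /log2; field; rewrite gt_eqF.
have -> : (q - p) / ln 2 = p / ln 2 * (q / p - 1) by field; rewrite !gt_eqF.
rewrite (mono_leif (lerD2l _)) (mono_leif (ler_pM2l _)) ?divr_gt0 //.
have -> : (p == q) = (q / p == 1).
  by rewrite -[1](divff p_neq0) eqr_div // (inj_eq (mulIf p_neq0)) eq_sym.
exact: ln_leif_subr1 (divr_gt0 q_gt0 p_gt0).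
Qed.

Lemma gibbs (T : finType) (p q : T -> R) :
  (forall t, 0 <= p t) -> (forall t, 0 <= q t) -> (forall t, 0 < p t -> 0 < q t) ->
  \sum_t q t = \sum_t p t ->
  \sum_t p t * log2 (q t) <= \sum_t p t * log2 (p t) ?= iff [forall t, p t == q t].
Proof.
move=> p_ge0 q_ge0 pq sum_qp.
have := @leif_sum _ _ xpredT _ _ _ (fun t _ => gibbs_term (p_ge0 t) (q_ge0 t) (pq t)).
by rewrite big_split /= -mulr_suml sumrB sum_qp subrr mul0r addr0.
Qed.

End Gibbs.

Section Entropy.
Variables (R : realType) (Omega : finType) (P : Omega -> R).

Definition law {T : finType} (X : Omega -> T) (t : T) : R := \sum_(o | X o == t) P o.

Lemma entropy_law {T : finType} (X : Omega -> T) :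
  entropy P X = - \sum_t law X t * log2 (law X t).
Proof. by []. Qed.

Lemma sum_comp_law {T : finType} (X : Omega -> T) (G : T -> R) :
  \sum_o P o * G (X o) = \sum_t law X t * G t.
Proof.
rewrite (partition_big X xpredT) //=; apply: eq_bigr => t _.
by rewrite /law big_distrl; apply: eq_bigr => o /eqP ->.
Qed.

Lemma entropyE {T : finType} (X : Omega -> T) :
  entropy P X = - \sum_o P o * log2 (law X (X o)).
Proof. by rewrite entropy_law -(sum_comp_law X (fun t => log2 (law X t))). Qed.

Lemma law_comp {T U : finType} (f : T -> U) (X : Omega -> T) u :
  law (f \o X) u = \sum_(t | f t == u) law X t.
Proof.
rewrite /law (partition_big X (fun t => f t == u)) //=.
apply: eq_bigr => t /eqP ftu; apply: eq_bigl => o.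
by have [->|] := eqVneq (X o) t; rewrite ?andbF ?ftu ?eqxx.
Qed.

Lemma law_pair_comp {T U V : finType} (X : Omega -> T) (Y : Omega -> U) (f : U -> V) :
  (forall t, law (fun o => (X o, Y o)) t = law X t.1 * law Y t.2) ->
  forall x v, law (fun o => (X o, f (Y o))) (x, v) = law X x * law (f \o Y) v.
Proof.
move=> XY x v.
rewrite (law_comp (fun t => (t.1, f t.2)) (fun o => (X o, Y o))) law_comp.
rewrite (eq_bigl (fun t => (t.1 == x) && (f t.2 == v))) => [|t]; last exact: xpair_eqE.
under eq_bigr do rewrite XY.
rewrite -(pair_big_dep (fun x' => x' == x) (fun _ u => f u == v)
                       (fun x' u => law X x' * law Y u)) /=.
by rewrite big_pred1_eq mulr_sumr.
Qed.

Lemma entropy_uniform_law {T : finType} (X : Omega -> T) : (0 < #|T|)%N ->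
  (forall t, law X t = #|T|%:R^-1) -> entropy P X = log2 #|T|%:R.
Proof.
move=> T_gt0 lawX; rewrite entropy_law.
rewrite (eq_bigr (fun _ => #|T|%:R^-1 * log2 #|T|%:R^-1)) => [|t _]; last by rewrite lawX.
rewrite sumr_const (_ : #|xpredT| = #|T|) // -[_ *+ #|T|]mulr_natr mulrAC.
by rewrite mulVf ?pnatr_eq0 -?lt0n // mul1r log2V ?ltr0n // opprK.
Qed.

Hypotheses (P_ge0 : forall o, 0 <= P o) (P_sum1 : \sum_o P o = 1).

Lemma ler_sum_subpred (a b : pred Omega) : (forall o, a o -> b o) ->
  \sum_(o | a o) P o <= \sum_(o | b o) P o.
Proof.
move=> ab; rewrite [leLHS]big_mkcond [leRHS]big_mkcond /=.
apply: ler_sum => o _; case: (boolP (a o)) => [/ab ->//|_].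
by case: (b o).
Qed.

Lemma law_ge0 {T : finType} (X : Omega -> T) t : 0 <= law X t.
Proof. exact: sumr_ge0. Qed.

Lemma sum_law {T : finType} (X : Omega -> T) : \sum_t law X t = 1.
Proof. by rewrite -P_sum1 (partition_big X xpredT) //=; apply: eq_bigr. Qed.

Lemma law_le1 {T : finType} (X : Omega -> T) t : law X t <= 1.
Proof. by rewrite -P_sum1; apply: ler_sum_subpred. Qed.

Lemma law_gt0 {T : finType} (X : Omega -> T) o : 0 < P o -> 0 < law X (X o).
Proof.
move=> Po; apply: lt_le_trans Po _.
by rewrite /law (bigD1 o) //= lerDl sumr_ge0.
Qed.

Lemma entropy_ge0 {T : finType} (X : Omega -> T) : 0 <= entropy P X.
Proof.
rewrite entropy_law oppr_ge0; apply: sumr_le0 => t _.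
by rewrite mulr_ge0_le0 ?law_ge0 ?log2_le0 ?law_le1.
Qed.

Lemma entropy_const {T : finType} (X : Omega -> T) :
  (forall o o', X o = X o') -> entropy P X = 0.
Proof.
move=> Xc; rewrite entropyE big1 ?oppr0 // => o _.
rewrite /law (eq_bigl xpredT) ?P_sum1 /log2 ?ln1 ?mul0r ?mulr0 // => o'.
by rewrite (Xc o' o) eqxx.
Qed.

Lemma le_entropy_determined {T U : finType} (X : Omega -> T) (Y : Omega -> U) :
  (forall o o', Y o = Y o' -> X o = X o') -> entropy P X <= entropy P Y.
Proof.
move=> YX; rewrite !entropyE lerN2; apply: ler_sum => o _.
have := P_ge0 o; rewrite le0r => /predU1P[->|Po]; first by rewrite !mul0r.
rewrite ler_wpM2l ?P_ge0 // ler_log2 ?posrE ?law_gt0 //.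
by apply: ler_sum_subpred => o' /eqP /YX ->.
Qed.

Lemma entropy_pair_leif {T U : finType} (X : Omega -> T) (Y : Omega -> U) :
  entropy P (fun o => (X o, Y o)) <= entropy P X + entropy P Y
  ?= iff [forall t, law (fun o => (X o, Y o)) t == law X t.1 * law Y t.2].
Proof.
set Z := fun o => (X o, Y o).
have -> : entropy P X + entropy P Y = - \sum_t law Z t * log2 (law X t.1 * law Y t.2).
  rewrite !entropyE -opprD -big_split.
  rewrite -(sum_comp_law Z (fun t => log2 (law X t.1 * law Y t.2))) /=.
  congr (- _); apply: eq_bigr => o _.
  have := P_ge0 o; rewrite le0r => /predU1P[->|Po]; first by rewrite !mul0r addr0.
  by rewrite -mulrDr /log2 lnM ?posrE ?law_gt0 // mulrDl.
rewrite entropy_law (nmono_leif (@lerN2 R)); apply: gibbs => [t|t|[x y] Zxy|].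
- exact: law_ge0.
- by rewrite mulr_ge0 ?law_ge0.
- rewrite mulr_gt0 //; apply: lt_le_trans Zxy _; apply: ler_sum_subpred.
    by move=> o /eqP[->].
  by move=> o /eqP[_ ->].
- rewrite sum_law -(pair_bigA _ (fun x y => law X x * law Y y)) /=.
  by under eq_bigr do rewrite -mulr_sumr sum_law mulr1; rewrite sum_law.
Qed.

Lemma entropy_le_log2_card {T : finType} (X : Omega -> T) :
  entropy P X <= log2 #|T|%:R.
Proof.
have T_gt0 : (0 < #|T|)%N.
  rewrite lt0n; apply: contra_eqN (sum_law X) => /eqP/card0_eq T0.
  by rewrite big_pred0 ?(eq_sym 0) ?oner_eq0.
have inv_gt0 : 0 < #|T|%:R^-1 :> R by rewrite invr_gt0 ltr0n.
have := gibbs (law_ge0 X) (fun _ => ltW inv_gt0) (fun _ _ => inv_gt0).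
rewrite sumr_const -[_ *+ _]mulr_natr mulVf ?pnatr_eq0 -?lt0n // sum_law.
case/(_ erefl) => + _.
by rewrite -mulr_suml sum_law mul1r log2V ?ltr0n // entropy_law lerNl.
Qed.

Lemma entropy_ffun_le {J T : finType} (X : Omega -> {ffun J -> T}) :
  entropy P X <= \sum_j entropy P (fun o => X o j).
Proof.
pose Xs (s : seq J) o := [ffun j => if j \in s then Some (X o j) else None].
have -> : entropy P X = entropy P (Xs (enum J)).
  apply/le_anti/andP; split; apply: le_entropy_determined => o o' /ffunP eqX.
    by apply/ffunP => j; have := eqX j; rewrite !ffunE mem_enum => -[].
  by apply/ffunP => j; rewrite !ffunE eqX.
rewrite -big_enum /=; elim: (enum J) => [|j s IH].
  by rewrite big_nil entropy_const // => o o'; apply/ffunP => j; rewrite !ffunE.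
rewrite big_cons; apply: le_trans (_ : _ <= entropy P (fun o => (X o j, Xs s o))) _.
  apply: le_entropy_determined => o o' [eqj eqs]; apply/ffunP => j'.
  rewrite !ffunE !in_cons; have [->|_] /= := eqVneq j' j; first by rewrite eqj.
  by move/ffunP: eqs => /(_ j'); rewrite !ffunE.
by apply: le_trans (entropy_pair_leif _ _).1 _; rewrite lerD2l.
Qed.

(* All terms [P o (log2 p_Y - log2 p_XY)] of [H(X,Y) - H(Y)] are nonnegative, hence zero;
   so [p_XY (X o, Y o) = p_Y (Y o)], which leaves no room for the mass of [o']. *)
Lemma entropy_pair_eq_determined {T U : finType} (X : Omega -> T) (Y : Omega -> U) :
  entropy P (fun o => (X o, Y o)) = entropy P Y ->
  forall o o', 0 < P o -> 0 < P o' -> Y o = Y o' -> X o = X o'.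
Proof.
set Z := fun o => (X o, Y o) => HZY o o' Po Po' Yoo'.
apply/eqP/negPn/negP => Xoo'.
pose d o1 := P o1 * (log2 (law Y (Y o1)) - log2 (law Z (Z o1))).
have d_ge0 o1 : 0 <= d o1.
  rewrite /d; have := P_ge0 o1; rewrite le0r => /predU1P[->|P1]; first by rewrite mul0r.
  rewrite mulr_ge0 ?P_ge0 // subr_ge0 ler_log2 ?posrE ?law_gt0 //.
  by apply: ler_sum_subpred => o2 /eqP[_ ->].
have d_sum0 : \sum_o1 d o1 = 0.
  under eq_bigr do rewrite /d mulrBr.
  by rewrite sumrB; have := entropyE Y; have := entropyE Z; lra.
have lawZ : law Z (Z o) = law Y (Y o).
  have /eqP := psumr_eq0P (fun o1 _ => d_ge0 o1) d_sum0 (isT : xpredT o).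
  rewrite /d mulf_eq0 (gt_eqF Po) subr_eq0 => /eqP /log2_inj.
  by rewrite !posrE !law_gt0 // => /(_ isT isT).
have : law Z (Z o) + P o' <= law Y (Y o).
  rewrite /law [leRHS](bigID (fun o2 => Z o2 == Z o)) /= lerD //.
    by apply: ler_sum_subpred => o2 /[dup] /eqP[_ ->] ->; rewrite eqxx.
  rewrite (bigD1 o') /=; last by rewrite Yoo' eqxx /Z xpair_eqE negb_and eq_sym Xoo'.
  by rewrite lerDl sumr_ge0.
rewrite lawZ; lra.
Qed.

End Entropy.

Section ProductLaw.
Variables (R : realType) (A W : finType) (p : A -> R) (u : W -> R).
Hypotheses (p_ge0 : forall a, 0 <= p a) (p_sum1 : \sum_a p a = 1).
Hypotheses (u_ge0 : forall w, 0 <= u w) (u_sum1 : \sum_w u w = 1).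

Lemma sum_prod_law_fst (a : pred A) :
  \sum_(o : A * W | a o.1) p o.1 * u o.2 = \sum_(x | a x) p x.
Proof.
rewrite (eq_bigl (fun o => a o.1 && xpredT o.2)) => [|o]; last by rewrite andbT.
rewrite -(pair_big a xpredT (fun x w => p x * u w)) /=.
by apply: eq_bigr => x _; rewrite -mulr_sumr u_sum1 mulr1.
Qed.

Lemma prod_law_ge0 (o : A * W) : 0 <= p o.1 * u o.2.
Proof. exact: mulr_ge0. Qed.

Lemma sum_prod_law : \sum_(o : A * W) p o.1 * u o.2 = 1.
Proof. by rewrite (sum_prod_law_fst xpredT). Qed.

Lemma entropy_prod_ge_avg {T : finType} (F : A -> W -> T) :
  \sum_a p a * entropy u (F a) <=
  entropy (fun o : A * W => p o.1 * u o.2) (fun o => F o.1 o.2).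
Proof.
set mu := law (fun o : A * W => p o.1 * u o.2) (fun o => F o.1 o.2).
have mu_ge a t : p a * law u (F a) t <= mu t.
  have -> : p a * law u (F a) t =
      \sum_(o : A * W | (o.1 == a) && (F o.1 o.2 == t)) p o.1 * u o.2.
    rewrite -(pair_big_dep (fun a' => a' == a) (fun a' w => F a' w == t)
                           (fun a' w => p a' * u w)) /=.
    by rewrite big_pred1_eq /law mulr_sumr.
  by apply: (ler_sum_subpred prod_law_ge0) => o /andP[].
rewrite entropyE -(pair_bigA _ (fun a w => p a * u w * log2 (mu (F a w)))) /=.
rewrite -sumrN; apply: ler_sum => a _.
under eq_bigr do rewrite -mulrA; rewrite -mulr_sumr -mulrN.
have := p_ge0 a; rewrite le0r => /predU1P[->|pa]; first by rewrite !mul0r.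
rewrite ler_pM2l // entropy_law lerN2 (sum_comp_law u (F a) (fun t => log2 (mu t))).
apply: (gibbs (law_ge0 u_ge0 _) (law_ge0 prod_law_ge0 _) _ _).1 => [t lawt|].
  exact: lt_le_trans (mulr_gt0 pa lawt) (mu_ge a t).
by rewrite (sum_law sum_prod_law) (sum_law u_sum1).
Qed.

End ProductLaw.

Lemma exists_le_avg (R : realDomainType) (T : finType) (a : pred T) (nu f : T -> R) :
  (forall t, 0 <= nu t) -> 0 < \sum_(t | a t) nu t ->
  exists2 t, a t && (0 < nu t) & (\sum_(t | a t) nu t) * f t <= \sum_(t | a t) nu t * f t.
Proof.
move=> nu_ge0 sum_gt0.
have [t0 t0_supp] : exists t, a t && (0 < nu t).
  apply/existsP; move: sum_gt0; apply: contraPT => /existsPn none.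
  rewrite big1 ?ltxx // => t at_.
  by apply/eqP; rewrite eq_le nu_ge0 andbT leNgt; have := none t; rewrite at_.
case: (@arg_minP _ _ _ t0 (fun t => a t && (0 < nu t)) f t0_supp) => t t_supp t_min.
exists t => //; rewrite mulr_suml; apply: ler_sum => t' at'.
have := nu_ge0 t'; rewrite le0r => /predU1P[->|nu_t']; first by rewrite !mul0r.
by rewrite ler_pM2l // t_min // at' nu_t'.
Qed.

Lemma sum_option (V : nmodType) (I : finType) (F : option I -> V) :
  \sum_(s : option I) F s = F None + \sum_i F (Some i).
Proof.
rewrite (bigD1 None) //=; congr (_ + _).
rewrite (reindex_omap Some (fun s => s)) //=; last by case.
by apply: eq_bigl => i; rewrite eqxx.
Qed.

Lemma sum_inj_le (R : numDomainType) (I J : finType) (f : I -> J) (c : J -> R) :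
  injective f -> (forall j, 0 <= c j) -> \sum_i c (f i) <= \sum_j c j.
Proof.
move=> f_inj c_ge0.
rewrite -(big_imset c (in2W f_inj)) /= [leRHS](bigID [in f @: I]) /= lerDl.
exact: sumr_ge0.
Qed.

Lemma disjoint_blocks (K t : nat) : (t * t <= K)%N ->
  exists2 B : 'I_t -> {set 'I_K}, forall b, #|B b| = t &
    forall (R : numDomainType) (c : 'I_K -> R), (forall j, 0 <= c j) ->
      \sum_b \sum_(j in B b) c j <= \sum_j c j.
Proof.
move=> ttK; have card_tt : (#|{: 'I_t * 'I_t}| <= K)%N by rewrite card_prod card_ord.
pose e (p : 'I_t * 'I_t) : 'I_K := widen_ord card_tt (enum_rank p).
have e_inj : injective e by move=> p p' /(congr1 val) /= /val_inj /enum_rank_inj.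
exists (fun b => [set e (b, i) | i : 'I_t]) => [b|R c c_ge0].
  by rewrite card_imset ?card_ord // => i i' /e_inj [].
under eq_bigr => b _ do rewrite big_imset /= => [|i i' _ _ /e_inj [] //].
rewrite pair_bigA /=; under eq_bigr do rewrite -surjective_pairing.
exact: sum_inj_le.
Qed.

Lemma exists_isqrt (n : nat) : exists t, (t * t <= n < t.+1 * t.+1)%N.
Proof.
elim: n => [|n [t /andP[lo hi]]]; first by exists 0%N.
have [le|lt] := leqP (t.+1 * t.+1) n.+1; [exists t.+1 | exists t]; apply/andP; lia.
Qed.

Section StarScheme.
Variables (R : realType) (K L : nat) (S : pir_scheme R (option 'I_K) K L).
Hypothesis S_valid : valid_pir (@star_store K) S.

Local Notation files := {ffun 'I_K -> file L}.

Lemma K_gt0 : (0 < K)%N. Proof. by case: S_valid. Qed.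
Lemma rnd_p_ge0 r : 0 <= rnd_p S r. Proof. by case: S_valid => _ []. Qed.
Lemma sum_rnd_p : \sum_r rnd_p S r = 1. Proof. by case: S_valid => _ []. Qed.

Lemma K_neq0 : K%:R != 0 :> R.
Proof. by rewrite pnatr_eq0 -lt0n K_gt0. Qed.

Lemma card_file : #|file L| = (2 ^ L)%N.
Proof. by rewrite card_mx card_Fp // mul1n. Qed.

Lemma card_files : #|files| = (2 ^ (L * K))%N.
Proof. by rewrite card_ffun card_file card_ord expnM. Qed.

Definition unif (w : files) : R := #|files|%:R^-1.
Definition user_p (x : 'I_K * rnd S) : R := K%:R^-1 * rnd_p S x.2.

Lemma unif_ge0 w : 0 <= unif w.
Proof. by rewrite invr_ge0. Qed.

Lemma sum_unif : \sum_w unif w = 1.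
Proof.
by rewrite sumr_const -[_^-1 *+ _]mulr_natr mulVf // pnatr_eq0 card_files expn_eq0.
Qed.

Lemma user_p_ge0 x : 0 <= user_p x.
Proof. by rewrite mulr_ge0 ?invr_ge0 ?rnd_p_ge0. Qed.

Lemma sum_user_p_at (k : 'I_K) (g : pred (rnd S)) :
  \sum_(x | (x.1 == k) && g x.2) user_p x = K%:R^-1 * \sum_(r | g r) rnd_p S r.
Proof.
rewrite -(pair_big_dep (fun k' => k' == k) (fun _ r => g r) (fun k' r => user_p (k', r))).
by rewrite big_pred1_eq mulr_sumr.
Qed.

Lemma sum_user_p : \sum_x user_p x = 1.
Proof.
rewrite -(pair_bigA _ (fun k r => user_p (k, r))) /=.
under eq_bigr do rewrite -mulr_sumr sum_rnd_p mulr1.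
by rewrite sumr_const card_ord -[_^-1 *+ _]mulr_natr mulVf ?K_neq0.
Qed.

Lemma prob_ge0 o : 0 <= prob S o.
Proof. exact: prod_law_ge0 user_p_ge0 unif_ge0 o. Qed.

Lemma sum_prob : \sum_o prob S o = 1.
Proof. exact: sum_prod_law sum_user_p sum_unif. Qed.

Lemma law_Theta k : law (prob S) (Theta S) k = K%:R^-1.
Proof.
rewrite /law (eq_bigl (fun o => (o.1.1 == k) && xpredT o.1.2)) => [|o]; last first.
  by rewrite andbT.
rewrite (sum_prod_law_fst user_p sum_unif (fun x => (x.1 == k) && xpredT x.2)).
by rewrite (sum_user_p_at k xpredT) sum_rnd_p mulr1.
Qed.

Lemma entropy_Theta : entropy (prob S) (Theta S) = log2 K%:R.
Proof.
by rewrite (entropy_uniform_law (X := Theta S)) ?card_ord ?K_gt0 // => k; rewrite law_Theta.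
Qed.

Definition view (s : option 'I_K) (o : omega S) :=
  (Qry S s o, Wstored (@star_store K) S s o).

Lemma privacy_indep s t :
  law (prob S) (fun o => (Theta S o, view s o)) t =
  law (prob S) (Theta S) t.1 * law (prob S) (view s) t.2.
Proof.
case: S_valid => _ _ _ _ /(_ s) priv.
have := eq_leif (entropy_pair_leif prob_ge0 sum_prob (Theta S) (view s)).
by rewrite entropy_Theta -priv /cond_entropy subrK eqxx => /esym/forallP/(_ t)/eqP.
Qed.

Lemma law_Theta_Qry s k q :
  law (prob S) (fun o => (Theta S o, Qry S s o)) (k, q) =
  K%:R^-1 * law (rnd_p S) (query S s k) q.
Proof.
rewrite /law -(sum_user_p_at k (fun r => query S s k r == q)).
rewrite -(sum_prod_law_fst user_p sum_unif).
apply: eq_bigl => -[[k' r] w] /=; rewrite xpair_eqE.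
by have [->|] := eqVneq k' k.
Qed.

Lemma law_query_indep s k q :
  law (rnd_p S) (query S s k) q = law (prob S) (Qry S s) q.
Proof.
have := law_pair_comp fst (privacy_indep s) k q.
by rewrite law_Theta law_Theta_Qry => /(mulfI (invr_neq0 K_neq0)).
Qed.

Definition ans_entropy (s : option 'I_K) (q : qry S) : R := entropy unif (answer S s q).

(* [H(A_s | Q_s)]: given the query, the answer is a function of the uniform files. *)
Definition cond_ans_entropy (s : option 'I_K) : R :=
  \sum_q law (prob S) (Qry S s) q * ans_entropy s q.

Lemma ans_entropy_ge0 s q : 0 <= ans_entropy s q.
Proof. exact: (entropy_ge0 unif_ge0 sum_unif). Qed.

Lemma sum_rnd_ans_entropy s k :
  \sum_r rnd_p S r * ans_entropy s (query S s k r) = cond_ans_entropy s.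
Proof.
rewrite (sum_comp_law (rnd_p S) (query S s k) (ans_entropy s)).
by apply: eq_bigr => q _; rewrite law_query_indep.
Qed.

Lemma cond_ans_entropy_ge0 s : 0 <= cond_ans_entropy s.
Proof.
rewrite -(sum_rnd_ans_entropy s (Ordinal K_gt0)) sumr_ge0 // => r _.
by rewrite mulr_ge0 ?rnd_p_ge0 ?ans_entropy_ge0.
Qed.

Lemma cond_ans_entropy_le s : cond_ans_entropy s <= entropy (prob S) (Ans S s).
Proof.
apply: le_trans (entropy_prod_ge_avg user_p_ge0 sum_user_p unif_ge0 sum_unif
  (fun x w => answer S s (query S s x.1 x.2) w)).
rewrite -(pair_bigA _ (fun k r => user_p (k, r) * ans_entropy s (query S s k r))) /=.
rewrite (eq_bigr (fun _ => K%:R^-1 * cond_ans_entropy s)) => [|k _].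
  by rewrite sumr_const card_ord -[_ *+ K]mulr_natl mulrA mulfV ?K_neq0 ?mul1r.
by rewrite -(sum_rnd_ans_entropy s k) mulr_sumr; apply: eq_bigr => r _; rewrite mulrA.
Qed.

Lemma reliable_decode k r (w w' : files) : 0 < rnd_p S r ->
  (forall s, answer S s (query S s k r) w = answer S s (query S s k r) w') ->
  w k = w' k.
Proof.
move=> r_gt0 same_ans; case: S_valid => _ _ _ + _.
rewrite /cond_entropy => /eqP; rewrite subr_eq0 => /eqP reliable.
have prob_gt0 w0 : 0 < prob S ((k, r), w0).
  by rewrite /prob !mulr_gt0 // invr_gt0 ltr0n ?K_gt0 // card_files expn_gt0.
apply: (entropy_pair_eq_determined prob_ge0 reliable (prob_gt0 w) (prob_gt0 w')).
by congr (_, _); apply/ffunP => s; rewrite !ffunE /Ans /= same_ans.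
Qed.

Lemma entropy_files : entropy unif (fun w : files => w) = (K * L)%:R.
Proof.
have law_id w : law unif (fun w => w) w = #|files|%:R^-1 by rewrite /law big_pred1_eq.
by rewrite (entropy_uniform_law _ law_id) card_files ?expn_gt0 // log2_exp2 mulnC.
Qed.

Section Block.
Variables (I : {set 'I_K}) (q : qry S) (rk : 'I_K -> rnd S).

Definition outside_files (w : files) := [ffun j => if j \in I then None else Some (w j)].

Definition leaf_answers (w : files) := [ffun kj : 'I_K * 'I_K =>
  if (kj.1 \in I) && (kj.2 \in I)
  then Some (answer S (Some kj.2) (query S (Some kj.2) kj.1 (rk kj.1)) w) else None].

Definition block_ans_entropy k r : R :=
  \sum_(j in I) ans_entropy (Some j) (query S (Some j) k r).

Lemma entropy_outside_files_le : entropy unif outside_files <= #|~: I|%:R * L%:R.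
Proof.
rewrite mulr_natl -sumr_const big_mkcond /=.
apply: le_trans (entropy_ffun_le unif_ge0 sum_unif outside_files) _.
apply: ler_sum => j _; rewrite in_setC; have [jI|jI] /= := boolP (j \in I).
  by rewrite entropy_const ?sum_unif // => w w'; rewrite !ffunE jI.
rewrite -log2_exp2 -card_file.
apply: le_trans (entropy_le_log2_card unif_ge0 sum_unif (fun w : files => w j)).
by apply: (le_entropy_determined unif_ge0) => w w' eqw; rewrite !ffunE (negbTE jI) eqw.
Qed.

Lemma entropy_leaf_answers_le :
  entropy unif leaf_answers <= \sum_(k in I) block_ans_entropy k (rk k).
Proof.
rewrite /block_ans_entropy pair_big big_mkcond /=.
apply: le_trans (entropy_ffun_le unif_ge0 sum_unif leaf_answers) _.
apply: ler_sum => -[k j] _ /=; have [kjI|kjI] := boolP ((k \in I) && (j \in I)).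
  by apply: (le_entropy_determined unif_ge0) => w w' eqw; rewrite !ffunE /= kjI eqw.
by rewrite entropy_const ?sum_unif // => w w'; rewrite !ffunE /= (negbTE kjI).
Qed.

Hypothesis rkI : forall k, k \in I -> 0 < rnd_p S (rk k) /\ query S None k (rk k) = q.

Lemma block_decode (w w' : files) :
  answer S None q w = answer S None q w' -> outside_files w = outside_files w' ->
  leaf_answers w = leaf_answers w' -> w = w'.
Proof.
move=> centre /ffunP outside /ffunP leaves; apply/ffunP => k.
have outside_eq j : j \notin I -> w j = w' j.
  by move=> jI; have := outside j; rewrite !ffunE (negbTE jI) => -[].
have [kI|] := boolP (k \in I); last exact: outside_eq.
have [r_gt0 qk] := rkI kI.
apply: (reliable_decode r_gt0) => -[j|]; last by rewrite qk.
have [jI|jI] := boolP (j \in I).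
  by have := leaves (k, j); rewrite !ffunE /= kI jI => -[].
case: S_valid => _ _ local _ _; apply: local => j'.
by rewrite /star_store inE => /eqP ->; exact: outside_eq.
Qed.

Lemma block_decode_bound :
  #|I|%:R * L%:R <= ans_entropy None q + \sum_(k in I) block_ans_entropy k (rk k).
Proof.
pose centre w := answer S None q w.
have decode : entropy unif (fun w : files => w) <=
    entropy unif (fun w => (centre w, outside_files w, leaf_answers w)).
  apply: (le_entropy_determined unif_ge0) => w w' [].
  exact: block_decode.
have split_l := (entropy_pair_leif unif_ge0 sum_unif
                   (fun w => (centre w, outside_files w)) leaf_answers).1.
have split_c := (entropy_pair_leif unif_ge0 sum_unif centre outside_files).1.
have card_I : #|I|%:R + #|~: I|%:R = K%:R :> R by rewrite -natrD cardsC card_ord.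
have : (K * L)%:R <= ans_entropy None q + #|~: I|%:R * L%:R +
                     \sum_(k in I) block_ans_entropy k (rk k).
  rewrite -entropy_files; apply: (le_trans decode); apply: (le_trans split_l).
  rewrite lerD ?entropy_leaf_answers_le // (le_trans split_c) //.
  by rewrite lerD ?entropy_outside_files_le.
by rewrite natrM -card_I mulrDl [leRHS]addrAC lerD2r.
Qed.

End Block.

Lemma block_ans_entropy_ge0 I k r : 0 <= block_ans_entropy I k r.
Proof. by apply: sumr_ge0 => j _; exact: ans_entropy_ge0. Qed.

(* The choice of [rk] in [block_decode_bound] is made below the average over the
   randomness producing [q], whose total mass is [P(Q_centre = q)] by privacy. *)
Lemma block_bound_at (I : {set 'I_K}) q :
  law (prob S) (Qry S None) q * (#|I|%:R * L%:R) <=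
  law (prob S) (Qry S None) q * ans_entropy None q +
  \sum_(k in I) \sum_(r | query S None k r == q) rnd_p S r * block_ans_entropy I k r.
Proof.
set pq := law (prob S) (Qry S None) q.
have := law_ge0 prob_ge0 (Qry S None) q; rewrite -/pq le0r => /predU1P[->|pq_gt0].
  rewrite !mul0r add0r; apply: sumr_ge0 => k _; apply: sumr_ge0 => r _.
  by rewrite mulr_ge0 ?rnd_p_ge0 ?block_ans_entropy_ge0.
have pick k : exists2 r, (query S None k r == q) && (0 < rnd_p S r) &
    pq * block_ans_entropy I k r <=
    \sum_(r | query S None k r == q) rnd_p S r * block_ans_entropy I k r.
  rewrite /pq -(law_query_indep None k); apply: exists_le_avg rnd_p_ge0 _.
  by rewrite -/(law _ _ q) law_query_indep.
have [rk rk_supp rk_le] := fin_all_exists2 pick.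
have rkI k : k \in I -> 0 < rnd_p S (rk k) /\ query S None k (rk k) = q.
  by case/andP: (rk_supp k) => /eqP.
apply: le_trans
  (_ : pq * (ans_entropy None q + \sum_(k in I) block_ans_entropy I k (rk k)) <= _).
  by rewrite ler_pM2l // block_decode_bound.
by rewrite mulrDr lerD2l mulr_sumr; apply: ler_sum => k _; exact: rk_le.
Qed.

Lemma sum_rnd_block_ans_entropy I k :
  \sum_r rnd_p S r * block_ans_entropy I k r = \sum_(j in I) cond_ans_entropy (Some j).
Proof.
under eq_bigr do rewrite /block_ans_entropy mulr_sumr.
by rewrite exchange_big; apply: eq_bigr => j _; exact: sum_rnd_ans_entropy.
Qed.

Lemma block_bound (I : {set 'I_K}) :
  #|I|%:R * L%:R <=
  cond_ans_entropy None + #|I|%:R * \sum_(j in I) cond_ans_entropy (Some j).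
Proof.
have := ler_sum (index_enum _) (P := xpredT) (fun q _ => block_bound_at I q).
rewrite -mulr_suml (sum_law sum_prob) mul1r big_split /= => /le_trans; apply.
rewrite lerD2l exchange_big /= mulr_natl -sumr_const; apply: ler_sum => k _.
by rewrite -(sum_rnd_block_ans_entropy I k) (partition_big (query S None k) xpredT).
Qed.

Lemma sum_entropy_Ans_ge (t : nat) : (0 < t)%N -> (t * t <= K)%N ->
  t%:R * L%:R <= \sum_s entropy (prob S) (Ans S s).
Proof.
move=> t_gt0 ttK; apply: le_trans
  (_ : cond_ans_entropy None + \sum_j cond_ans_entropy (Some j) <= _); last first.
  rewrite sum_option lerD ?cond_ans_entropy_le //.
  by apply: ler_sum => j _; exact: cond_ans_entropy_le.
have [B card_B sum_B] := disjoint_blocks ttK.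
have t_pos : 0 < t%:R :> R by rewrite ltr0n.
have : \sum_(b : 'I_t) t%:R * L%:R <=
    \sum_b (cond_ans_entropy None + t%:R * \sum_(j in B b) cond_ans_entropy (Some j)).
  by apply: ler_sum => b _; rewrite -(card_B b) block_bound.
rewrite big_split /= !sumr_const card_ord -mulr_sumr.
rewrite -[_ *+ t]mulr_natl -[cond_ans_entropy None *+ t]mulr_natl => sum_bound.
rewrite -(ler_pM2l t_pos) mulrDr; apply: le_trans sum_bound _.
by rewrite lerD2l ler_pM2l // sum_B // => j; exact: cond_ans_entropy_ge0.
Qed.

Lemma pir_rate_le_inv (t : nat) : (0 < t)%N -> (t * t <= K)%N -> pir_rate S <= t%:R^-1.
Proof.
move=> t_gt0 ttK; have := sum_entropy_Ans_ge t_gt0 ttK; rewrite /pir_rate.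
set D := \sum_s _ => tL_le_D.
have [->|L_gt0] := posnP L; first by rewrite mul0r invr_ge0 ler0n.
have t_pos : 0 < t%:R :> R by rewrite ltr0n.
have D_gt0 : 0 < D by apply: lt_le_trans tL_le_D; rewrite mulr_gt0 ?ltr0n.
by rewrite ler_pdivrMr // -(ler_pM2l t_pos) mulrA mulfV ?mul1r // lt0r_neq0.
Qed.

End StarScheme.

Theorem theorem3 (R : realType) :
  exists c : R, exists N0 : nat,
    forall (K L : nat) (S : pir_scheme R (option 'I_K) K L),
      (N0 <= K.+1)%N ->
      valid_pir (@star_store K) S ->
      pir_rate S <= c / Num.sqrt (K.+1)%:R.
Proof.
exists 2, 0%N => K L S _ S_valid.
have [t /andP[ttK Klt]] := exists_isqrt K.
have t_gt0 : (0 < t)%N by have := K_gt0 S_valid; lia.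
apply: le_trans (pir_rate_le_inv S_valid t_gt0 ttK) _.
have sqrt_gt0 : 0 < Num.sqrt K.+1%:R :> R by rewrite sqrtr_gt0 ltr0n.
rewrite -invf_div lef_pV2 ?posrE ?divr_gt0 ?ltr0n // ler_pdivrMr //.
apply: le_trans (_ : t.+1%:R <= _); last by rewrite -natrM ler_nat; lia.
rewrite -[leRHS]ger0_norm ?ler0n // -sqrtr_sqr ler_sqrt ?sqr_ge0 //.
by rewrite -natrX ler_nat expnS expn1.
Qed.
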